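(* Let $\epsilon$ be real and, for $i=1,2$, let $\alpha_i,\beta_i,\eta_i$ be real constants with $\beta_i^2=e^{\alpha_i\epsilon}+e^{-\alpha_i\epsilon}-2$. Assume $P(p_1+p_2)\neq0$ and set $A(1,2)=-\dfrac{P(p_1-p_2)}{P(p_1+p_2)}$. Then $$f(x,t)=1+e^{\theta_1}+e^{\theta_2}+A(1,2)e^{\theta_1+\theta_2},\qquad \theta_i=-\frac{\alpha_i}{x}+\beta_i t+\eta_i,$$ satisfies the bilinear generalized $q$-Toda equation $\big[D_t^2-\big(e^{\epsilon x^2D_x}+e^{-\epsilon x^2 D_x}-2\big)\big]f\cdot f=0$.
   Context: Hirota operators: $P(D_x,D_t)\,f\cdot g := P(\partial_x-\partial_{x'},\partial_t-\partial_{t'})f(x,t)g(x',t')|_{x'=x,t'=t}$; $e^{\pm\epsilon x^2 D_x} f\cdot g$ means $f\!\left(\frac{x}{1\mp\epsilon x}\right)g\!\left(\frac{x}{1\pm\epsilon x}\right)$. For a vector $p=(\beta,\alpha,\eta)$ define $P(p)=\beta^2-\big(e^{\alpha\epsilon}+e^{-\alpha\epsilon}-2\big)$, and $p_i=(\beta_i,\alpha_i,\eta_i)$ with componentwise sums and differences. *)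

From Stdlib Require Import Reals.
Open Scope R_scope.

(* P(p) = beta^2 - (e^{alpha eps} + e^{-alpha eps} - 2), for p = (beta, alpha, eta). *)
Definition Pq (eps beta alpha : R) : R :=
  beta ^ 2 - (exp (alpha * eps) + exp (- (alpha * eps)) - 2).

Definition A12 (eps a1 b1 a2 b2 : R) : R :=
  - (Pq eps (b1 - b2) (a1 - a2) / Pq eps (b1 + b2) (a1 + a2)).

Definition theta (a b e x t : R) : R := - (a / x) + b * t + e.

Definition f2 (eps a1 b1 e1 a2 b2 e2 : R) (x t : R) : R :=
  1 + exp (theta a1 b1 e1 x t) + exp (theta a2 b2 e2 x t)
    + A12 eps a1 b1 a2 b2 * exp (theta a1 b1 e1 x t + theta a2 b2 e2 x t).

(* Bilinear operator [D_t^2 - (e^{eps x^2 D_x} + e^{-eps x^2 D_x} - 2)] f.f at (x,t),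
   given ft = df/dt and ftt = d^2f/dt^2:
   D_t^2 f.f = 2 (f f_tt - f_t^2);
   e^{eps x^2 D_x} f.f = f(x/(1-eps x)) f(x/(1+eps x));
   e^{-eps x^2 D_x} f.f = f(x/(1+eps x)) f(x/(1-eps x));
   2 f.f = 2 f(x)^2. *)
Definition qToda_bilinear (eps : R) (f ft ftt : R -> R -> R) (x t : R) : R :=
  (ftt x t * f x t - 2 * ft x t * ft x t + f x t * ftt x t)
  - ( f (x / (1 - eps * x)) t * f (x / (1 + eps * x)) t
    + f (x / (1 + eps * x)) t * f (x / (1 - eps * x)) t
    - 2 * (f x t * f x t) ).

(* Each exponential e^{theta_i} is an eigenfunction of both shifts x -> x/(1 -+ eps x) (they
   translate -alpha_i/x by +-alpha_i eps) and of d/dt.  Hence the bilinear expression for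
   f = 1 + E1 + E2 + A E1 E2 is a polynomial in E1, E2 whose coefficients are the dispersion
   values P(p1), P(p2) and A P(p1 + p2) + P(p1 - p2); the first two vanish by the dispersion
   relations and the last one by the choice of A(1,2). *)

From Stdlib Require Import Reals Lra.
From Coquelicot Require Import Coquelicot.
Open Scope R_scope.

Lemma exp_theta_shift_minus (a b e eps x t : R) : x <> 0 -> 1 - eps * x <> 0 ->
  exp (theta a b e (x / (1 - eps * x)) t) = exp (theta a b e x t) * exp (a * eps).
Proof.
  intros Hx H. rewrite <- exp_plus. f_equal. unfold theta. field. split; auto.
Qed.

Lemma exp_theta_shift_plus (a b e eps x t : R) : x <> 0 -> 1 + eps * x <> 0 ->
  exp (theta a b e (x / (1 + eps * x)) t) = exp (theta a b e x t) / exp (a * eps).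
Proof.
  intros Hx H. unfold Rdiv. rewrite <- exp_Ropp, <- exp_plus. f_equal.
  unfold theta. field. split; auto.
Qed.

Lemma Pq_dispersion (eps b a : R) :
  b ^ 2 = exp (a * eps) + exp (- (a * eps)) - 2 -> Pq eps b a = 0.
Proof. intro H. unfold Pq. lra. Qed.

Lemma A12_Pq (eps a1 b1 a2 b2 : R) : Pq eps (b1 + b2) (a1 + a2) <> 0 ->
  A12 eps a1 b1 a2 b2 * Pq eps (b1 + b2) (a1 + a2) + Pq eps (b1 - b2) (a1 - a2) = 0.
Proof. intro HP. unfold A12. field. exact HP. Qed.

Section TwoSoliton.

Variables eps a1 b1 e1 a2 b2 e2 : R.

Let A := A12 eps a1 b1 a2 b2.
Let f := f2 eps a1 b1 e1 a2 b2 e2.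
Let E1 x t := exp (theta a1 b1 e1 x t).
Let E2 x t := exp (theta a2 b2 e2 x t).

Definition f2_t (x t : R) : R :=
  b1 * E1 x t + b2 * E2 x t + A * (b1 + b2) * exp (theta a1 b1 e1 x t + theta a2 b2 e2 x t).

Definition f2_tt (x t : R) : R :=
  b1 ^ 2 * E1 x t + b2 ^ 2 * E2 x t
  + A * (b1 + b2) ^ 2 * exp (theta a1 b1 e1 x t + theta a2 b2 e2 x t).

Lemma f2_derivable (x t : R) : derivable_pt_lim (fun s => f x s) t (f2_t x t).
Proof.
  apply is_derive_Reals. unfold f, f2_t, f2, E1, E2, theta.
  auto_derive; [trivial | unfold A; ring].
Qed.

Lemma f2_t_derivable (x t : R) : derivable_pt_lim (fun s => f2_t x s) t (f2_tt x t).
Proof.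
  apply is_derive_Reals. unfold f2_t, f2_tt, E1, E2, theta.
  auto_derive; [trivial | ring].
Qed.

Lemma f2_shift_minus (x t : R) : x <> 0 -> 1 - eps * x <> 0 ->
  f (x / (1 - eps * x)) t
  = 1 + E1 x t * exp (a1 * eps) + E2 x t * exp (a2 * eps)
    + A * (E1 x t * exp (a1 * eps)) * (E2 x t * exp (a2 * eps)).
Proof.
  intros Hx H. unfold f, f2, E1, E2. fold A.
  rewrite exp_plus, !exp_theta_shift_minus by assumption. ring.
Qed.

Lemma f2_shift_plus (x t : R) : x <> 0 -> 1 + eps * x <> 0 ->
  f (x / (1 + eps * x)) t
  = 1 + E1 x t / exp (a1 * eps) + E2 x t / exp (a2 * eps)
    + A * (E1 x t / exp (a1 * eps)) * (E2 x t / exp (a2 * eps)).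
Proof.
  intros Hx H. unfold f, f2, E1, E2. fold A.
  rewrite exp_plus, !exp_theta_shift_plus by assumption. ring.
Qed.

Lemma qToda_bilinear_f2 (x t : R) :
  x <> 0 -> 1 - eps * x <> 0 -> 1 + eps * x <> 0 ->
  qToda_bilinear eps f f2_t f2_tt x t
  = 2 * (E1 x t + A * E1 x t * E2 x t ^ 2) * Pq eps b1 a1
    + 2 * (E2 x t + A * E1 x t ^ 2 * E2 x t) * Pq eps b2 a2
    + 2 * E1 x t * E2 x t
        * (A * Pq eps (b1 + b2) (a1 + a2) + Pq eps (b1 - b2) (a1 - a2)).
Proof.
  intros Hx Hm Hp. unfold qToda_bilinear.
  rewrite f2_shift_minus, f2_shift_plus by assumption.
  unfold f2_t, f2_tt, f, f2, Pq. fold A (E1 x t) (E2 x t).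
  rewrite !exp_plus.
  replace ((a1 + a2) * eps) with (a1 * eps + a2 * eps) by ring.
  replace ((a1 - a2) * eps) with (a1 * eps + - (a2 * eps)) by ring.
  rewrite !Ropp_plus_distr, !exp_plus, !exp_Ropp.
  fold (E1 x t) (E2 x t).
  assert (exp (a1 * eps) <> 0) by apply Rgt_not_eq, exp_pos.
  assert (exp (a2 * eps) <> 0) by apply Rgt_not_eq, exp_pos.
  field. split; assumption.
Qed.

End TwoSoliton.

Theorem mainTheorem3 (eps a1 b1 e1 a2 b2 e2 : R)
  (H1 : b1 ^ 2 = exp (a1 * eps) + exp (- (a1 * eps)) - 2)
  (H2 : b2 ^ 2 = exp (a2 * eps) + exp (- (a2 * eps)) - 2)
  (HP : Pq eps (b1 + b2) (a1 + a2) <> 0) :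
  let f := f2 eps a1 b1 e1 a2 b2 e2 in
  exists ft ftt : R -> R -> R,
    (forall x t, x <> 0 -> derivable_pt_lim (fun s => f x s) t (ft x t)) /\
    (forall x t, x <> 0 -> derivable_pt_lim (fun s => ft x s) t (ftt x t)) /\
    (forall x t, x <> 0 -> 1 - eps * x <> 0 -> 1 + eps * x <> 0 ->
       qToda_bilinear eps f ft ftt x t = 0).
Proof.
  intro f.
  exists (f2_t eps a1 b1 e1 a2 b2 e2), (f2_tt eps a1 b1 e1 a2 b2 e2).
  split; [|split].
  - intros x t _. apply f2_derivable.
  - intros x t _. apply f2_t_derivable.
  - intros x t Hx Hm Hp. unfold f.
    rewrite qToda_bilinear_f2, A12_Pq, !Pq_dispersion by assumption.
    ring.
Qed.
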